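(* Let $s,t$ be real numbers with $t>0$ and $s>1+t$, and put \[ \mathcal{S}(s,t)=\sum_{p}\frac{p^s}{p^s-1}\cdot\frac{p^t}{p^s-1+p^t}\ln p,\qquad \mathcal{T}(s,t)=\sum_{p}\frac{p^t}{p^s-1+p^t}\ln p, \] where both sums run over all primes $p$. Let $a,b$ be coprime positive integers and $c=a+b$, and suppose that $c<R(c)^{\mathcal{S}(s,t)/\mathcal{T}(s,t)}$. Then \[ a+b<R(abc)^{2}. \]
   Context: For a positive integer $n$, $R(n)$ denotes the radical of $n$, i.e. the product of the distinct primes dividing $n$ (with $R(1)=1$). For $t>0$ and $s>1+t$ the two series defining $\mathcal{S}(s,t)$ and $\mathcal{T}(s,t)$ converge. *)

From Stdlib Require Import Reals.
From Coquelicot Require Import Coquelicot.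
From mathcomp Require Import ssreflect ssrfun ssrbool eqtype ssrnat seq prime bigop.

Definition rad (n : nat) : nat := (\prod_(p <- primes n) p)%N.

Open Scope R_scope.

Definition rpow (p : nat) (x : R) : R := Rpower (INR p) x.

Definition S_term (s t : R) (n : nat) : R :=
  if prime n then
    (rpow n s / (rpow n s - 1)) * (rpow n t / (rpow n s - 1 + rpow n t)) * ln (INR n)
  else 0.

Definition T_term (s t : R) (n : nat) : R :=
  if prime n then (rpow n t / (rpow n s - 1 + rpow n t)) * ln (INR n) else 0.

Definition SS (s t : R) : R := Series (S_term s t).
Definition TT (s t : R) : R := Series (T_term s t).

From Stdlib Require Import Reals Lra.
From Coquelicot Require Import Coquelicot.
From mathcomp Require Import ssreflect ssrfun ssrbool eqtype ssrnat seq prime bigop div.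

(* For s >= 1 every prime satisfies p^s >= 2, so the factor p^s/(p^s - 1)
   separating the summands of S(s,t) from those of T(s,t) is at most 2.
   Hence S(s,t) <= 2 T(s,t), and the hypothesis gives
   c < R(c)^(S/T) <= R(c)^2 <= R(abc)^2. *)

Lemma rad_gt0 n : (0 < rad n)%N.
Proof. by rewrite /rad big_seq prodn_cond_gt0 // => p /[!mem_primes] /andP[/prime_gt0]. Qed.

Lemma rad_dvd m n : (0 < n)%N -> (m %| n)%N -> (rad m %| rad n)%N.
Proof.
move=> n_gt0 m_dvd_n.
have dvdn_mul_self (x y : nat) : (x %| x * y)%N by exact: dvdn_mulr.
apply: (uniq_sub_le_big dvdnn dvdn_mul_self); rewrite ?primes_uniq //.
by move=> p; rewrite !mem_primes n_gt0 => /and3P[-> _ /dvdn_trans->].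
Qed.

Lemma rad_leq m n : (0 < n)%N -> (m %| n)%N -> (rad m <= rad n)%N.
Proof. by move=> n_gt0 m_dvd_n; exact: dvdn_leq (rad_gt0 n) (rad_dvd _ _ n_gt0 m_dvd_n). Qed.

Local Open Scope R_scope.

Lemma INR_ge2 n : (2 <= n)%N -> 2 <= INR n.
Proof. by move=> n_ge2; apply: (le_INR 2); apply/leP. Qed.

Lemma rpow_gt0 n x : 0 < rpow n x.
Proof. exact: exp_pos. Qed.

Lemma rpow_ge2 n x : (2 <= n)%N -> 1 <= x -> 2 <= rpow n x.
Proof.
move=> n_ge2 x_ge1; have n_ge2R := INR_ge2 n n_ge2.
apply: (Rle_trans _ (INR n)) => //.
rewrite -{1}(Rpower_1 (INR n)); last lra.
by apply: Rle_Rpower; lra.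
Qed.

Lemma ln_INR_gt0 n : (2 <= n)%N -> 0 < ln (INR n).
Proof. by move=> /INR_ge2 n_ge2; rewrite -ln_1; apply: ln_increasing; lra. Qed.

Lemma T_term_ge0 s t n : 1 <= s -> 0 <= T_term s t n.
Proof.
move=> s_ge1; rewrite /T_term; case: ifP => [/prime_gt1 n_ge2|_]; last lra.
have ps_ge2 := rpow_ge2 n s n_ge2 s_ge1.
have pt_gt0 := rpow_gt0 n t.
have lnp_gt0 := ln_INR_gt0 n n_ge2.
apply: Rmult_le_pos; last lra.
by apply: Rlt_le; apply: Rdiv_lt_0_compat; lra.
Qed.

Lemma S_term_le_2T s t n : 1 <= s -> 0 <= S_term s t n <= 2 * T_term s t n.
Proof.
move=> s_ge1; have := T_term_ge0 s t n s_ge1.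
rewrite /S_term /T_term; case: ifP => [/prime_gt1 n_ge2|_]; last lra.
have := rpow_ge2 n s n_ge2 s_ge1; set X := rpow n s => X_ge2 T_ge0.
have ratio_bounds : 0 <= X / (X - 1) <= 2.
  split; first by apply: Rlt_le; apply: Rdiv_lt_0_compat; lra.
  by apply/Rle_div_l; lra.
rewrite Rmult_assoc; split; first by apply: Rmult_le_pos; lra.
by apply: Rmult_le_compat_r; lra.
Qed.

(* [Series] is [0] on a divergent series, so for nonnegative terms a nonzero
   value can only come from a convergent one. *)
Lemma ex_series_of_Series_neq0 (a : nat -> R) :
  (forall n, 0 <= a n) -> Series a <> 0 -> ex_series a.
Proof.
move=> a_ge0 Sa_neq0.
have ex_lim : ex_lim_seq (sum_n a).
  by apply: ex_lim_seq_incr => n; rewrite sum_Sn /plus /=; have := a_ge0 n.+1; lra.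
move: Sa_neq0 (Lim_seq_correct _ ex_lim); rewrite /Series.
by case: (Lim_seq _) => [l| |] //= _ sum_a_l; exists l.
Qed.

Lemma Series_ge0 (a : nat -> R) :
  (forall n, 0 <= a n) -> ex_series a -> 0 <= Series a.
Proof.
move=> a_ge0 ex_a; rewrite -(Rmult_0_l (Series a)) -Series_scal_l.
by apply: Series_le => // n; have := a_ge0 n; lra.
Qed.

Lemma SS_div_TT_le2 s t : 1 <= s -> TT s t <> 0 -> SS s t / TT s t <= 2.
Proof.
move=> s_ge1 TT_neq0.
have T_ge0 n := T_term_ge0 s t n s_ge1.
have ex_T := ex_series_of_Series_neq0 _ T_ge0 TT_neq0.
have TT_gt0 : 0 < TT s t by have := Series_ge0 _ T_ge0 ex_T; rewrite -/(TT s t); lra.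
have SS_le : SS s t <= 2 * TT s t.
  rewrite /SS /TT -Series_scal_l; apply: Series_le => [n|].
    exact: S_term_le_2T.
  exact: ex_series_scal_l.
by apply/Rle_div_l.
Qed.

Lemma Rpower_le_sqr x e : 1 <= x -> e <= 2 -> Rpower x e <= x * x.
Proof.
move=> x_ge1 e_le2; have -> : x * x = x ^ 2 by ring.
rewrite -Rpower_pow; last lra.
by apply: Rle_Rpower => //=; lra.
Qed.

Theorem theorem2 (s t : R) (a b : nat) :
  (0 < t)%R -> (1 + t < s)%R ->
  (0 < a)%N -> (0 < b)%N -> coprime a b ->
  (INR (a + b) < Rpower (INR (rad (a + b))) (SS s t / TT s t))%R ->
  (a + b < (rad (a * b * (a + b))) ^ 2)%N.
Proof.
move=> t_gt0 st a_gt0 b_gt0 _ c_lt.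
have c_ge2 : 2 <= INR (a + b) by apply: INR_ge2; rewrite -(addn1 1) leq_add.
have radc_ge1 : 1 <= INR (rad (a + b)) by apply: (le_INR 1); apply/leP; exact: rad_gt0.
have [TT_0|TT_neq0] := Req_dec (TT s t) 0.
  (* Division by 0 yields 0, so the hypothesis degenerates to c < 1. *)
  by move: c_lt; rewrite TT_0 /Rdiv Rinv_0 Rmult_0_r Rpower_O; lra.
have c_lt_sqr : INR (a + b) < INR (rad (a + b) * rad (a + b)).
  rewrite mult_INR; apply: (Rlt_le_trans _ _ _ c_lt).
  by apply: Rpower_le_sqr => //; apply: SS_div_TT_le2; lra.
have radc_le : (rad (a + b) <= rad (a * b * (a + b)))%N.
  by apply: rad_leq; [rewrite !muln_gt0 a_gt0 b_gt0 addn_gt0 a_gt0 | exact: dvdn_mull].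
rewrite -mulnn; apply: (leq_trans _ (leq_mul radc_le radc_le)).
by apply/ltP; apply: INR_lt.
Qed.
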